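(* Let $\mathcal{D}$ be any distribution over a domain $X$ and $c$ any concept, and let $\mathcal{D}_c$ be the distribution of $(\mathbf{x}, c(\mathbf{x}))$ where $\mathbf{x} \sim \mathcal{D}$. Suppose a sample $\mathbf{S}'_{\mathrm{big}}$ of $nk$ labeled points is generated by an $\eta$-rate nasty adversary with clean distribution $\mathcal{D}_c$: a clean sample $\mathbf{S}_{\mathrm{big}} \sim (\mathcal{D}_c)^{nk}$ is drawn, the adversary chooses a set $\mathbf{Z} \subseteq [nk]$ of indices (possibly depending on the clean sample) whose size $|\mathbf{Z}|$ has marginal distribution $\mathrm{Bin}(nk,\eta)$, and replaces the examples at indices in $\mathbf{Z}$ by arbitrary labeled examples. The sample $\mathbf{S}'_{\mathrm{big}}$ is then split into $k$ groups $(\mathbf{S}^{(1)})', \ldots, (\mathbf{S}^{(k)})'$ by drawing a uniform random permutation $\boldsymbol{\sigma}:[nk]\to[nk]$, forming $\boldsymbol{\sigma}(\mathbf{S}'_{\mathrm{big}})$ with $i$-th element $(\mathbf{S}'_{\mathrm{big}})_{\boldsymbol{\sigma}(i)}$, and letting $(\mathbf{S}^{(1)})'$ be its first $n$ elements, $(\mathbf{S}^{(2)})'$ the next $n$ elements, and so on. Then there exist random variables $\mathbf{S}^{(1)}, \ldots, \mathbf{S}^{(k)}$ and $\mathbf{z}_1, \ldots, \mathbf{z}_k$ (jointly defined with this process) with the following properties: 1. The marginal distribution of $\mathbf{S}^{(1)}, \ldots, \mathbf{S}^{(k)}$ is that of $k$ independent draws from $(\mathcal{D}_c)^n$. 2.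 The marginal distribution of $\mathbf{z}_1, \ldots, \mathbf{z}_k$ is that of $k$ independent draws from $\mathrm{Bin}(n, \eta)$. 3. With probability $1$, for all $i \in [k]$, the number of coordinates on which $\mathbf{S}^{(i)}$ and $(\mathbf{S}^{(i)})'$ differ is at most $\mathbf{z}_i$.
   Context: This concerns the success-probability amplification procedure for learners under nasty noise, which randomly permutes a corrupted size-$nk$ sample and splits it into $k$ groups of size $n$, running a base learner on each group. In the $\eta$-rate nasty noise model, a clean labeled sample is drawn i.i.d., then the adversary (seeing the whole clean sample) chooses a subset of indices to corrupt whose size is marginally $\mathrm{Bin}(\text{sample size},\eta)$, and replaces those examples arbitrarily. No assumption is made about the correlation between the $\mathbf{S}^{(i)}$ and the $\mathbf{z}_i$. *)

From HB Require Import structures.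
From mathcomp Require Import all_boot all_order all_algebra.
From mathcomp Require Import fingroup perm.
From mathcomp Require Import all_classical all_reals all_analysis.
From mathcomp Require Import zify.
Set Implicit Arguments. Unset Strict Implicit. Unset Printing Implicit Defensive.
Import Order.TTheory GRing.Theory Num.Theory.
Local Open Scope classical_set_scope.
Local Open Scope ring_scope.

Definition Dc {R : realType} {d : measure_display} {X : measurableType d}
  (D : probability X R) (c : X -> bool) (A : set (X * bool)) : R :=
  fine (D ((fun x => (x, c x)) @^-1` A)).

(* Probability mass function of Bin(n, eta) at m (= 0 when m > n). *)
Definition binom_pmf {R : realType} (n : nat) (eta : R) (m : nat) : R :=
  'C(n, m)%:R * eta ^+ m * (1 - eta) ^+ (n - m).

Definition iid_Dc {R : realType} {d : measure_display} {X : measurableType d}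
  {dO : measure_display} {Omega : measurableType dO} (Pr : probability Omega R)
  (D : probability X R) (c : X -> bool) (I : finType) (S : I -> Omega -> X * bool) :=
  (forall i, measurable_fun setT (S i)) /\
  (forall A : I -> set (X * bool), (forall i, measurable (A i)) ->
     Pr [set w | forall i, A i (S i w)] = (\prod_i Dc D c (A i))%:E).

Lemma block_index_subproof (n k : nat) (i : 'I_k) (j : 'I_n) : (i * n + j < n * k)%N.
Proof. have := ltn_ord i; have := ltn_ord j; nia. Qed.

(* Position (0-based) of the j-th element of the i-th group of size n. *)
Definition block_index (n k : nat) (i : 'I_k) (j : 'I_n) : 'I_(n * k) :=
  Ordinal (block_index_subproof i j).

From HB Require Import structures.
From mathcomp Require Import all_boot all_order all_algebra.
From mathcomp Require Import fingroup perm.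
From mathcomp Require Import all_classical all_reals all_analysis.
Import Order.TTheory GRing.Theory Num.Theory.
Set Implicit Arguments. Unset Strict Implicit. Unset Printing Implicit Defensive.

(* Take the blocks of the permuted clean sample, S^(i)_j := (S_big)_(sigma (i n + j)), and let
   z_i := #{j | sigma (i n + j) \in Z} count the corrupted positions that land in block i; then
   S^(i) and (S^(i))' can only differ at those j.  Since sigma is uniform and independent of the
   clean sample, the sample permuted by any fixed s is still i.i.d., hence so are the blocks.
   Given Z = B, the set sigma^-1(B) is a uniform |B|-subset of [nk], so z is multivariate
   hypergeometric: Pr[z = m | Z = B] = prod_i C(n, m_i) / C(nk, |B|) when |B| = sum_i m_i, and
   0 otherwise.  This is a double count: the number of permutations s for which s^-1(B) has block
   counts m depends only on |B|, and summing it over all B of a given size counts every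
   permutation once per admissible set.  Averaging over |Z| ~ Bin(nk, eta) cancels C(nk, M) and
   leaves prod_i C(n, m_i) eta^m_i (1 - eta)^(n - m_i). *)

Lemma perm_preimset_card_eq (T : finType) (B0 B1 : {set T}) :
  #|B0| = #|B1| -> exists t : {perm T}, t @^-1: B1 = B0.
Proof.
move=> eqB.
(* [e B] enumerates [T] with [B] first; [t] maps the j-th item of [e B0] to that of [e B1]. *)
pose e (B : {set T}) := enum B ++ enum (~: B).
have e_uniq B : uniq (e B).
  rewrite cat_uniq !enum_uniq andbT; apply/hasPn => x.
  by rewrite !mem_enum inE => /negbTE ->.
have size_e B : size (e B) = #|T| by rewrite size_cat -!cardE cardsC.
have in_e (B : {set T}) x : x \in e B by rewrite mem_cat !mem_enum inE orbN.
have index_e (B : {set T}) x : (x \in B) = (index x (e B) < #|B|).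
  rewrite index_cat mem_enum; case: ifP => xB.
    by rewrite cardE index_mem mem_enum.
  by rewrite -cardE ltnNge leq_addr.
pose f x := nth x (e B1) (index x (e B0)).
have index_f x : index (f x) (e B1) = index x (e B0).
  by apply: index_uniq; rewrite // size_e -(size_e B0) index_mem.
have f_inj : injective f.
  move=> x y /(congr1 (index^~ (e B1))); rewrite !index_f.
  exact: index_inj.
exists (perm f_inj); apply/setP => x.
by rewrite inE permE index_e index_f -eqB -index_e.
Qed.

Section BlockCards.
Variables (K J T : finType) (b : K -> J -> T).

Definition block_card (B : {set T}) (i : K) := #|[set j | b i j \in B]|.

Definition has_block_cards (m : K -> nat) (B : {set T}) :=
  [forall i, block_card B i == m i].

Definition perm_count (m : K -> nat) (B : {set T}) :=
  #|[set s : {perm T} | has_block_cards m (s @^-1: B)]|.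

Hypothesis b_bij : bijective (fun p : K * J => b p.1 p.2).

Lemma sum_block_card (B : {set T}) : \sum_i block_card B i = #|B|.
Proof.
rewrite -sum1_card (reindex (fun p : K * J => b p.1 p.2)) /=; last exact: onW_bij.
under eq_bigr => i _ do rewrite /block_card -sum1dep_card.
by rewrite pair_big_dep.
Qed.

Lemma card_has_block_cards (m : K -> nat) :
  #|[set B | has_block_cards m B]| = \prod_i 'C(#|J|, m i).
Proof.
have [g bK Kb] := b_bij.
pose psi (F : {ffun K -> {set J}}) : {set T} := [set x | (g x).2 \in F (g x).1].
have psiE F i : [set j | b i j \in psi F] = F i.
  by apply/setP => j; rewrite !inE (bK (i, j)).
have psi_bij : bijective psi.
  exists (fun B : {set T} => [ffun i => [set j | b i j \in B]]) => [F|B].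
    by apply/ffunP => i; rewrite ffunE psiE.
  by apply/setP => x; rewrite !inE ffunE inE; case: (g x) (Kb x) => i j /= ->.
rewrite -(on_card_preimset (onW_bij _ psi_bij)).
rewrite (eq_card (B := family (fun i => [pred A : {set J} | #|A| == m i]))); last first.
  by move=> F; rewrite !inE; apply: eq_forallb => i; rewrite /block_card psiE.
rewrite card_family foldrE big_map big_enum /=.
by apply: eq_bigr => i _; rewrite -card_draws; apply: eq_card => A; rewrite inE.
Qed.

Lemma perm_count_card_eq (m : K -> nat) (B0 B1 : {set T}) :
  #|B0| = #|B1| -> perm_count m B0 = perm_count m B1.
Proof.
move=> /perm_preimset_card_eq [t <-].
rewrite /perm_count -[RHS](card_preimset _ (mulIg t)); apply: eq_card => s.
rewrite !inE; congr has_block_cards.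
by apply/setP => x; rewrite !inE permM.
Qed.

Lemma sum_perm_count (m : K -> nat) (M : nat) :
  \sum_(B : {set T} | #|B| == M) perm_count m B =
  #|{perm T}| * #|[set A : {set T} | (#|A| == M) && has_block_cards m A]|.
Proof.
rewrite /perm_count.
under eq_bigr => B _ do rewrite -sum1dep_card.
rewrite (exchange_big_dep xpredT) //= -sum_nat_const; apply: eq_bigr => s _.
rewrite -sum1dep_card.
rewrite (reindex (fun A : {set T} => s^-1%g @^-1: A)) /=; last first.
  apply: onW_bij; exists (fun B : {set T} => s @^-1: B) => B.
    by apply/setP => x; rewrite !inE permK.
  by apply/setP => x; rewrite !inE permKV.
apply: eq_bigl => A; rewrite card_preimset; last exact: perm_inj.
by congr (_ && has_block_cards _ _); apply/setP => x; rewrite !inE permK.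
Qed.

Lemma has_block_cards_card (m : K -> nat) (A : {set T}) :
  has_block_cards m A -> #|A| = \sum_i m i.
Proof.
by move=> /forallP cardA; rewrite -sum_block_card; apply: eq_bigr => i _; apply/eqP.
Qed.

Lemma perm_count_binomial (m : K -> nat) (B : {set T}) :
  perm_count m B * 'C(#|T|, #|B|) =
  #|{perm T}| * (if #|B| == \sum_i m i then \prod_i 'C(#|J|, m i) else 0).
Proof.
have sum_const :
    \sum_(A : {set T} | #|A| == #|B|) perm_count m A = 'C(#|T|, #|B|) * perm_count m B.
  rewrite (eq_bigr (fun=> perm_count m B)) => [|A /eqP]; last exact: perm_count_card_eq.
  by rewrite sum_nat_cond_const card_draws.
rewrite mulnC -sum_const sum_perm_count; congr (_ * _).
have [->|neqM] := eqVneq #|B| (\sum_i m i).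
  rewrite -card_has_block_cards; apply: eq_card => A; rewrite !inE.
  case cardA: (has_block_cards m A); rewrite ?andbT ?andbF //.
  by rewrite (has_block_cards_card cardA) eqxx.
apply/eqP; rewrite cards_eq0; apply/eqP/setP => A; rewrite !inE.
apply/negbTE/andP => -[/eqP cardAB /has_block_cards_card cardA].
by move: neqM; rewrite -cardAB cardA eqxx.
Qed.
End BlockCards.

Lemma block_index_bij (n k : nat) :
  bijective (fun p : 'I_k * 'I_n => block_index p.1 p.2).
Proof.
apply: inj_card_bij; last by rewrite card_prod !card_ord mulnC.
move=> [i j] [i' j'] /(congr1 val) /= eq_ij.
have n_gt0 : 0 < n by apply: leq_ltn_trans (ltn_ord j).
have /val_inj -> : j = j' :> nat.
  by move: (congr1 (modn^~ n) eq_ij); rewrite /= !modnMDl !modn_small.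
suff /val_inj -> : i = i' :> nat by [].
by move: (congr1 (divn^~ n) eq_ij); rewrite /= !divnMDl // !divn_small // !addn0.
Qed.

Local Open Scope ring_scope.

(* If some m_i > n both sides vanish, so the junk value x / 0 = 0 is harmless. *)
Lemma prod_binom_pmf (R : realType) (eta : R) (n k : nat) (m : 'I_k -> nat) :
  \prod_i binom_pmf n eta (m i) =
  (\prod_i 'C(n, m i))%:R / 'C(n * k, \sum_i m i)%:R *
    binom_pmf (n * k) eta (\sum_i m i).
Proof.
rewrite /binom_pmf.
have [i lt_n_mi|] := pickP (fun i : 'I_k => n < m i)%N.
  by rewrite (bigD1 i) //= [in RHS](bigD1 i) //= bin_small // !(mul0r, mul0n).
move=> le_m_n; have {}le_m_n i : (m i <= n)%N by rewrite leqNgt le_m_n.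
have le_sum : (\sum_i m i <= n * k)%N.
  by rewrite mulnC -[k in (k * n)%N]card_ord -sum_nat_const leq_sum.
have binN_neq0 : 'C(n * k, \sum_i m i)%:R != 0 :> R by rewrite pnatr_eq0 -lt0n bin_gt0.
rewrite !mulrA mulfVK // !big_split /= natr_prod prodrXr prodrXr; congr (_ * _ ^+ _).
by rewrite sumnB // big_const_ord iter_addn_0 mulnC.
Qed.

Local Open Scope classical_set_scope.

Section FiniteValued.
Variables (d : measure_display) (T : measurableType d) (I : finType) (f : T -> I).
Hypothesis mf : forall i, measurable [set w | f w = i].

Lemma measurable_fin_preimage (P : I -> Prop) : measurable [set w | P (f w)].
Proof.
have -> : [set w | P (f w)] = \bigcup_(i in P) [set w | f w = i].
  by apply/seteqP; split => [w Pw|w [i Pi /= ->]] //; exists (f w).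
by apply: fin_bigcup_measurable; first exact: finite_finset.
Qed.

Lemma measurable_fun_fin_case d' (U : measurableType d') (g : I -> T -> U) :
  (forall i, measurable_fun setT (g i)) -> measurable_fun setT (fun w => g (f w) w).
Proof.
move=> mg _ Y mY; rewrite setTI.
have -> : (fun w => g (f w) w) @^-1` Y =
    \bigcup_(i in setT) ([set w | f w = i] `&` g i @^-1` Y).
  by apply/seteqP; split => [w Yw|w [i _ [/= ->]]] //; exists (f w).
apply: fin_bigcup_measurable; first exact: finite_finset.
by move=> i _; apply: measurableI => //; rewrite -[_ @^-1` _]setTI; apply: mg.
Qed.

Variables (R : realType) (mu : {measure set T -> \bar R}).

Lemma measure_fin_partition (E : set T) :
  (forall i, measurable (E `&` [set w | f w = i])) ->
  mu E = (\sum_i mu (E `&` [set w | f w = i]))%E.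
Proof.
move=> mEf.
have cover : \bigcup_(i in [set: I]) (E `&` [set w | f w = i]) = E.
  by apply/seteqP; split => [w [i _ []]|w Ew] //; exists (f w).
rewrite -[in LHS]cover measure_fin_bigcup //; last first.
- by move=> i j _ _ [w [[_ <-] [_ <-]]].
- exact: finite_finset.
rewrite (fsbigE (enum I)) ?enum_uniq // => [|i _]; last by rewrite mem_enum.
by rewrite big_enum_cond /=; apply: eq_bigl => i; rewrite in_setT.
Qed.

Lemma measure_fin_preimage (P : pred I) :
  mu [set w | P (f w)] = (\sum_(i | P i) mu [set w | f w = i])%E.
Proof.
rewrite measure_fin_partition => [|i]; last first.
  by apply: measurableI; [exact: (measurable_fin_preimage (fun i => P i)) | exact: mf].
rewrite [RHS]big_mkcond; apply: eq_bigr => i _.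
case: ifPn => Pi; last rewrite -(measure0 mu); congr (mu _).
  by apply/seteqP; split => [w []|w /= fwi] //; rewrite /= fwi.
by apply/seteqP; split => // w [/= Pfw fwi]; move: Pi; rewrite -fwi Pfw.
Qed.
End FiniteValued.

Lemma measurable_fin_forall d d' (T : measurableType d) (U : measurableType d')
    (I : finType) (g : I -> T -> U) (A : I -> set U) :
  (forall i, measurable (A i)) -> (forall i, measurable_fun setT (g i)) ->
  measurable [set w | forall i, A i (g i w)].
Proof.
move=> mA mg.
have -> : [set w | forall i, A i (g i w)] =
    \bigcap_(i in [set: I]) (setT `&` g i @^-1` A i).
  apply/seteqP; split => [w gA i _|w gA i]; first by split; last exact: gA.
  by have [] := gA i Logic.I.
by apply: fin_bigcap_measurable => [|i _]; [exact: finite_finset | exact: mg].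
Qed.

Lemma iid_Dc_reindex (R : realType) (d : measure_display) (X : measurableType d)
    (dO : measure_display) (Omega : measurableType dO) (Pr : probability Omega R)
    (D : probability X R) (c : X -> bool) (I J : finType)
    (S : I -> Omega -> X * bool) (e : J -> I) :
  bijective e -> iid_Dc Pr D c S -> iid_Dc Pr D c (fun j => S (e j)).
Proof.
move=> [e' eK Ke] [mS prodS]; split=> [j|A mA]; first exact: mS.
have -> : [set w | forall j, A j (S (e j) w)] = [set w | forall i, A (e' i) (S i w)].
  apply/seteqP; split => w /= AS i; first by have := AS (e' i); rewrite Ke.
  by have := AS (e i); rewrite eK.
rewrite (prodS (fun i => A (e' i))) => [|i]; last exact: mA.
rewrite [in LHS](reindex e) /=; last by apply: onW_bij; exists e'.
by under eq_bigr do rewrite eK.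
Qed.

Section UniformPermutation.
Variables (R : realType) (d : measure_display) (X : measurableType d)
  (D : probability X R) (c : X -> bool).
Variables (dO : measure_display) (Omega : measurableType dO) (Pr : probability Omega R).
Variables (N : nat) (Sbig Sbig' : 'I_N -> Omega -> X * bool)
  (Z : Omega -> {set 'I_N}) (sigma : Omega -> {perm 'I_N}).
Hypothesis Hclean : iid_Dc Pr D c Sbig.
Hypothesis HZmeas : forall B : {set 'I_N}, measurable [set w | Z w = B].
Hypothesis Hsigmeas : forall s, measurable [set w | sigma w = s].
Hypothesis Hsigma : forall (s : {perm 'I_N}) (A B : 'I_N -> set (X * bool))
    (F : set {set 'I_N}),
  (forall i, measurable (A i)) -> (forall i, measurable (B i)) ->
  Pr [set w | [/\ sigma w = s, (forall i, A i (Sbig i w)), F (Z w)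
                & (forall i, B i (Sbig' i w))]]
  = (((N`!)%:R^-1)%:E *
     Pr [set w | [/\ (forall i, A i (Sbig i w)), F (Z w)
                 & (forall i, B i (Sbig' i w))]])%E.

Lemma measure_sigma_sample (s : {perm 'I_N}) (A : 'I_N -> set (X * bool)) :
  (forall i, measurable (A i)) ->
  Pr [set w | sigma w = s /\ forall i, A i (Sbig i w)] =
  (N`!%:R^-1 * \prod_i Dc D c (A i))%:E.
Proof.
move=> mA; rewrite EFinM -(proj2 Hclean A mA).
transitivity (Pr [set w | [/\ sigma w = s, (forall i, A i (Sbig i w)), setT (Z w)
                            & (forall i, setT (Sbig' i w))]]).
  by congr (Pr _); apply/seteqP; split => [w [sw AS]|w [sw AS _ _]].
rewrite (@Hsigma s A (fun=> setT) setT mA (fun=> measurableT)).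
by congr (_ * Pr _)%E; apply/seteqP; split => [w [AS _ _]|w AS].
Qed.

Lemma measure_sigma_Z (s : {perm 'I_N}) (B : {set 'I_N}) :
  Pr [set w | (sigma w, Z w) = (s, B)] = ((N`!%:R^-1)%:E * Pr [set w | Z w = B])%E.
Proof.
transitivity (Pr [set w | [/\ sigma w = s, (forall i, setT (Sbig i w)), [set B] (Z w)
                            & (forall i, setT (Sbig' i w))]]).
  by congr (Pr _); apply/seteqP; split => [w /= [-> ->]|w /= [-> _ -> _]].
rewrite (@Hsigma s (fun=> setT) (fun=> setT) [set B] (fun=> measurableT)
  (fun=> measurableT)).
by congr (_ * Pr _)%E; apply/seteqP; split => [w /= [_ ->]|w /= ->].
Qed.

Lemma measurable_sigma_Z (P : {perm 'I_N} * {set 'I_N} -> Prop) :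
  measurable [set w | P (sigma w, Z w)].
Proof.
apply: (measurable_fin_preimage (f := fun w => (sigma w, Z w))) => -[s B].
have -> : [set w | (sigma w, Z w) = (s, B)] = [set w | sigma w = s] `&` [set w | Z w = B].
  by apply/seteqP; split => w /= [-> ->].
exact: measurableI.
Qed.

Lemma iid_Dc_permuted : iid_Dc Pr D c (fun i w => Sbig (sigma w i) w).
Proof.
split=> [i|A mA].
  exact: (measurable_fun_fin_case Hsigmeas (fun s => proj1 Hclean (s i))).
have fiberE s :
    [set w | forall i, A i (Sbig (sigma w i) w)] `&` [set w | sigma w = s] =
    [set w | sigma w = s /\ forall i, A (s^-1 i)%g (Sbig i w)].
  apply/seteqP; split => w /= [].
    by move=> AS <-; split => // i; have := AS ((sigma w)^-1 i)%g; rewrite permKV.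
  by move=> -> AS; split => // i; have := AS (s i); rewrite permK.
rewrite (measure_fin_partition (f := sigma)) => [|s]; last first.
  rewrite fiberE; apply: measurableI; first exact: Hsigmeas.
  apply: (measurable_fin_forall (A := fun i => A (s^-1 i)%g)) => i; first exact: mA.
  exact: (proj1 Hclean).
rewrite (eq_bigr (fun=> (N`!%:R^-1 * \prod_i Dc D c (A i))%:E)) => [|s _]; last first.
  rewrite fiberE.
  have /= -> := @measure_sigma_sample s (fun i => A (s^-1 i)%g) (fun i => mA _).
  rewrite [in LHS](reindex s) /=; last first.
    by apply: onW_bij; exists s^-1%g; [exact: permK | exact: permKV].
  by under eq_bigr do rewrite permK.
have fact_neq0 : N`!%:R != 0 :> R by rewrite pnatr_eq0 -lt0n fact_gt0.
by rewrite sumEFin sumr_const card_Sn -mulrnAl -mulr_natr mulVf ?mul1r.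
Qed.

Variables (K J : finType) (b : K -> J -> 'I_N).
Hypothesis b_bij : bijective (fun p : K * J => b p.1 p.2).

Lemma measurable_block_card (i : K) (j : nat) :
  measurable [set w | block_card b (sigma w @^-1: Z w) i = j].
Proof.
exact: (measurable_sigma_Z
  (fun sB : {perm 'I_N} * {set 'I_N} => block_card b (sB.1 @^-1: sB.2) i = j)).
Qed.

Lemma measure_block_cards (m : K -> nat) :
  Pr [set w | forall i, block_card b (sigma w @^-1: Z w) i = m i] =
  (\sum_B (perm_count b m B)%:R / N`!%:R * fine (Pr [set w | Z w = B]))%:E.
Proof.
pose cards_eq (sB : {perm 'I_N} * {set 'I_N}) := has_block_cards b m (sB.1 @^-1: sB.2).
have -> : [set w | forall i, block_card b (sigma w @^-1: Z w) i = m i] =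
    [set w | cards_eq (sigma w, Z w)].
  apply/seteqP; split => w /= cardsE; first by apply/forallP => i; apply/eqP.
  by move=> i; apply/eqP; move/forallP: cardsE.
rewrite (measure_fin_preimage (fun sB => measurable_sigma_Z (eq^~ sB)) Pr cards_eq) /=.
rewrite (eq_bigr (fun sB => (N`!%:R^-1 * fine (Pr [set w | Z w = sB.2]))%:E))
  => [|[s B] _]; last by rewrite measure_sigma_Z -[Pr _]fineK ?fin_num_measure.
rewrite sumEFin big_mkcond -(pair_bigA _ (fun s B => if cards_eq (s, B)
  then N`!%:R^-1 * fine (Pr [set w | Z w = B]) else 0)) exchange_big /=.
congr (_%:E); apply: eq_bigr => B _.
rewrite -big_mkcond sumr_const -mulrnAl -[N`!%:R^-1 *+ _]mulr_natl.
congr (_%:R * _ * _).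
by apply: eq_card => s; rewrite inE.
Qed.

Lemma block_cards_hypergeometric (m : K -> nat) :
  Pr [set w | forall i, block_card b (sigma w @^-1: Z w) i = m i] =
  (((\prod_i 'C(#|J|, m i))%:R / 'C(N, (\sum_i m i)%N)%:R)%:E *
    Pr [set w | #|Z w| = (\sum_i m i)%N])%E.
Proof.
have -> : [set w | #|Z w| = \sum_i m i] = [set w | (fun B => #|B| == \sum_i m i) (Z w)].
  by apply/seteqP; split => w /= /eqP.
rewrite measure_block_cards (measure_fin_preimage HZmeas Pr (fun B => #|B| == \sum_i m i)).
rewrite (eq_bigr (fun B => (fine (Pr [set w | Z w = B]))%:E)) => [|B _]; last first.
  by rewrite fineK ?fin_num_measure.
rewrite sumEFin -EFinM mulr_sumr [in RHS]big_mkcond; congr (_%:E); apply: eq_bigr => B _.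
have fact_neq0 : N`!%:R != 0 :> R by rewrite pnatr_eq0 -lt0n fact_gt0.
have bin_neq0 : 'C(N, #|B|)%:R != 0 :> R.
  by rewrite pnatr_eq0 -lt0n bin_gt0 -[X in (_ <= X)%N](card_ord N) max_card.
have := congr1 (fun x => x%:R : R) (perm_count_binomial b_bij m B).
rewrite card_ord card_Sn !natrM => countE.
have -> : (perm_count b m B)%:R / N`!%:R =
    (if #|B| == \sum_i m i then \prod_i 'C(#|J|, m i) else 0)%:R / 'C(N, #|B|)%:R :> R.
  by apply: (mulIf bin_neq0); rewrite mulfVK // mulrAC countE mulrAC mulfV ?mul1r.
by case: eqP => [->|_]; rewrite ?mul0r.
Qed.

End UniformPermutation.

Theorem proposition5p6 (R : realType) (d : measure_display) (X : measurableType d)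
  (D : probability X R) (c : X -> bool) (cmeas : measurable_fun setT c)
  (n k : nat) (eta : R) (eta_ge0 : 0 <= eta) (eta_le1 : eta <= 1)
  (dO : measure_display) (Omega : measurableType dO) (Pr : probability Omega R)
  (Sbig : 'I_(n * k) -> Omega -> X * bool)
  (Z : Omega -> {set 'I_(n * k)})
  (Sbig' : 'I_(n * k) -> Omega -> X * bool)
  (sigma : Omega -> {perm 'I_(n * k)})
  (* clean sample S_big ~ (D_c)^(nk) *)
  (Hclean : iid_Dc Pr D c Sbig)
  (* the corrupted index set Z: measurable, with |Z| ~ Bin(nk, eta) *)
  (HZmeas : forall B : {set 'I_(n * k)}, measurable [set w | Z w = B])
  (HZbin : forall m : nat,
     Pr [set w | #|Z w| = m] = (binom_pmf (n * k) eta m)%:E)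
  (* the corrupted sample: measurable, agrees with the clean one outside Z *)
  (HS'meas : forall i, measurable_fun setT (Sbig' i))
  (HS'Z : forall w i, i \notin Z w -> Sbig' i w = Sbig i w)
  (* sigma is a uniform random permutation, independent of (S_big, Z, S'_big) *)
  (Hsigmeas : forall s, measurable [set w | sigma w = s])
  (Hsigma : forall (s : {perm 'I_(n * k)}) (A B : 'I_(n * k) -> set (X * bool))
       (F : set {set 'I_(n * k)}),
     (forall i, measurable (A i)) -> (forall i, measurable (B i)) ->
     Pr [set w | [/\ sigma w = s, (forall i, A i (Sbig i w)), F (Z w)
                   & (forall i, B i (Sbig' i w))]]
     = ((((n * k)`!)%:R^-1)%:E *
       Pr [set w | [/\ (forall i, A i (Sbig i w)), F (Z w)
                   & (forall i, B i (Sbig' i w))]])%E) :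
  exists (S : 'I_k -> 'I_n -> Omega -> X * bool) (z : 'I_k -> Omega -> nat),
    (* 1. S^(1), ..., S^(k) are k independent draws from (D_c)^n *)
    iid_Dc Pr D c (fun ij : 'I_k * 'I_n => S ij.1 ij.2) /\
    (* 2. z_1, ..., z_k are k independent draws from Bin(n, eta) *)
    (forall i m, measurable [set w | z i w = m]) /\
    (forall m : 'I_k -> nat,
       Pr [set w | forall i, z i w = m i] = (\prod_i binom_pmf n eta (m i))%:E) /\
    (* 3. almost surely, S^(i) and (S^(i))' differ on at most z_i coordinates,
          where the j-th element of (S^(i))' is (S'_big)_{sigma(i*n+j)} *)
    {ae Pr, forall w, forall i : 'I_k,
       (#|[set j : 'I_n | S i j w != Sbig' (sigma w (block_index i j)) w]%SET| <= z i w)%N}.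
Proof.
have blocks_bij := block_index_bij n k.
exists (fun i j w => Sbig (sigma w (block_index i j)) w).
exists (fun i w => block_card (@block_index n k) (sigma w @^-1: Z w) i).
split; [|split; [|split]].
- exact: iid_Dc_reindex blocks_bij (iid_Dc_permuted Hclean Hsigmeas Hsigma).
- by move=> i m; apply: measurable_block_card.
- move=> m; rewrite (block_cards_hypergeometric HZmeas Hsigmeas Hsigma blocks_bij) HZbin.
  by rewrite card_ord -EFinM -prod_binom_pmf.
- apply: aeW => w i; apply: subset_leq_card; apply/fintype.subsetP => j.
  by rewrite !inE; apply: contraR => /HS'Z ->; rewrite eqxx.
Qed.
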